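(* Let $P,Q\subseteq\mathbb R^n$ be nonzero closed convex cones with $|\mathfrak s(P,Q)|\ne1$, and let $L$ be the smallest linear subspace of $\mathbb R^n$ containing both $P$ and $Q$. Let $\bar u$ be a solution of $\min_{u\in P\cap S_n}F_Q(u)$ such that $\mathtt{Proj}_{Q\cap S_n}(\bar u)$ is a singleton. Then $\bar u$ lies on the boundary of $P$ relative to $L$ (i.e., $\bar u$ is not an interior point of $P$ in the relative topology of $L$).
   Context: $S_n$ is the unit sphere of $\mathbb R^n$. $F_Q(u):=\max_{v\in Q\cap S_n}\langle u,v\rangle$, $\mathfrak s(P,Q):=\min_{u\in P\cap S_n}F_Q(u)$, and $\mathtt{Proj}_X(u):=\arg\min_{x\in X}\|x-u\|$. *)

(* R^n is modelled as 'rV[R]_n, R : realType. *)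
From HB Require Import structures.
From mathcomp Require Import all_boot all_order all_algebra.
From mathcomp Require Import all_classical all_reals all_analysis.
Set Implicit Arguments. Unset Strict Implicit. Unset Printing Implicit Defensive.
Import Order.TTheory GRing.Theory Num.Theory.
Import numFieldNormedType.Exports.
Local Open Scope classical_set_scope.
Local Open Scope ring_scope.

Section Defs.
Variables (R : realType) (n : nat).
Implicit Types (u v x : 'rV[R]_n) (P Q : set 'rV[R]_n).

Definition dotp u v : R := \sum_(i < n) u ord0 i * v ord0 i.
Definition enorm u : R := Num.sqrt (dotp u u).

Definition sphere : set 'rV[R]_n := [set u | enorm u = 1].

Definition is_cone P := forall x t, P x -> 0 <= t -> P (t *: x).
Definition is_convex P :=
  forall x y t, P x -> P y -> 0 <= t <= 1 -> P (t *: x + (1 - t) *: y).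
Definition nonzero_closed_convex_cone P :=
  [/\ closed P, is_convex P, is_cone P & exists x, P x /\ x != 0].

(* F_Q(u) = max_{v in Q ∩ S_n} <u,v>  (the max exists; written as a sup) *)
Definition FQ Q u : R := sup [set dotp u v | v in Q `&` sphere].

(* s(P,Q) = min_{u in P ∩ S_n} F_Q(u)  (written as an inf) *)
Definition sPQ P Q : R := inf [set FQ Q u | u in P `&` sphere].

Definition is_solution P Q ubar :=
  (P `&` sphere) ubar /\ forall u, (P `&` sphere) u -> FQ Q ubar <= FQ Q u.

Definition Proj (X : set 'rV[R]_n) u : set 'rV[R]_n :=
  [set x | X x /\ forall y, X y -> enorm (x - u) <= enorm (y - u)].

Definition is_singleton (A : set 'rV[R]_n) := exists x, A = [set x].

Definition is_subspace (L : set 'rV[R]_n) :=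
  [/\ L 0, (forall x y, L x -> L y -> L (x + y)) & (forall a x, L x -> L (a *: x))].
Definition span2 P Q : set 'rV[R]_n :=
  [set x | forall L, is_subspace L -> P `<=` L -> Q `<=` L -> L x].

Definition rel_interior_pt (L P : set 'rV[R]_n) x :=
  exists2 e : R, 0 < e & forall y, L y -> enorm (y - x) < e -> P y.
End Defs.

From HB Require Import structures.
From mathcomp Require Import all_boot all_order all_algebra.
From mathcomp Require Import all_classical all_reals all_analysis.
From mathcomp Require Import ring lra.
Import Order.TTheory GRing.Theory Num.Theory.
Import numFieldNormedType.Exports.
Local Open Scope classical_set_scope.
Local Open Scope ring_scope.
Set Implicit Arguments. Unset Strict Implicit.

(* Suppose ubar were interior to P relative to L, and let vbar be its unique
   nearest point in Q ∩ S_n, so that F_Q(ubar) = <ubar, vbar> = s(P,Q).  Since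
   |<ubar, vbar>| <> 1, the component w = vbar - <ubar, vbar> ubar of vbar
   orthogonal to ubar is nonzero, and moving ubar on the unit circle of
   span(ubar, w) away from w keeps it in P ∩ S_n for a short time.  Along this
   move, points of Q ∩ S_n with a large component along w lose inner product at
   first order, while the remaining ones form a compact set avoiding vbar, hence
   stay a fixed distance below <ubar, vbar>.  So F_Q strictly decreases,
   contradicting the minimality of ubar. *)

Lemma compact_lt_gap (R : realType) (T : topologicalType) (C : set T)
    (f : T -> R) (c : R) :
  compact C -> continuous f -> (forall x, C x -> f x < c) ->
  exists2 eta : R, 0 < eta & forall x, C x -> f x <= c - eta.
Proof.
move=> cC cf flt; have [[x0 Cx0]|C0] := pselect (C !=set0); last first.
  by exists 1 => // x Cx; exfalso; apply: C0; exists x.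
have [xm /set_mem Cxm xm_max] :=
  compact_EVT_max (ex_intro _ x0 Cx0) cC (continuous_subspaceT cf).
exists (c - f xm); first by rewrite subr_gt0 flt.
by move=> x Cx; rewrite opprB addrC subrK; exact: xm_max (mem_set Cx).
Qed.

Section Dotp.
Variables (R : realType) (n : nat).
Implicit Types (x y z : 'rV[R]_n).

Lemma dotpDl x y z : dotp (x + y) z = dotp x z + dotp y z.
Proof. by rewrite /dotp -big_split; apply: eq_bigr => i _; rewrite !mxE mulrDl. Qed.

Lemma dotpZl a x z : dotp (a *: x) z = a * dotp x z.
Proof. by rewrite /dotp mulr_sumr; apply: eq_bigr => i _; rewrite !mxE mulrA. Qed.

Lemma dotpC x y : dotp x y = dotp y x.
Proof. by apply: eq_bigr => i _; rewrite mulrC. Qed.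

Lemma dotpBl x y z : dotp (x - y) z = dotp x z - dotp y z.
Proof. by rewrite dotpDl -scaleN1r dotpZl mulN1r. Qed.

Lemma dotpZr a x z : dotp z (a *: x) = a * dotp z x.
Proof. by rewrite dotpC dotpZl dotpC. Qed.

Lemma dotpBr x y z : dotp z (x - y) = dotp z x - dotp z y.
Proof. by rewrite dotpC dotpBl !(dotpC z). Qed.

Lemma dotpp_ge0 x : 0 <= dotp x x.
Proof. by apply: sumr_ge0 => i _; rewrite -expr2 sqr_ge0. Qed.

Lemma coord_sqr_le_dotpp x i : x ord0 i ^+ 2 <= dotp x x.
Proof.
rewrite /dotp (bigD1 i) //= -expr2 lerDl.
by apply: sumr_ge0 => j _; rewrite -expr2 sqr_ge0.
Qed.

Lemma dotpp_scaleB p q x y : dotp (p *: x - q *: y) (p *: x - q *: y) =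
  p ^+ 2 * dotp x x - 2 * p * q * dotp x y + q ^+ 2 * dotp y y.
Proof. by rewrite !dotpBl !dotpBr !dotpZl !dotpZr (dotpC y x); ring. Qed.

Lemma continuous_dotp (T : topologicalType) (f g : T -> 'rV[R]_n) :
  continuous f -> continuous g -> continuous (fun t => dotp (f t) (g t)).
Proof.
move=> cf cg; rewrite /dotp; elim: (index_enum _) => [|i r IH].
  by under eq_fun do rewrite big_nil; exact: cst_continuous.
under eq_fun do rewrite big_cons; move=> t.
have coord_comp (h : T -> 'rV[R]_n) : continuous h -> continuous (fun t => h t ord0 i).
  by move=> ch s; exact: (continuous_comp (ch s) (@coord_continuous R 1 n ord0 i (h s))).
apply: (@continuousD _ R^o _ (fun t => f t ord0 i * g t ord0 i)); last exact: IH.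
by apply: continuousM; apply: coord_comp.
Qed.

Lemma continuous_dotpr x : continuous (fun y => dotp x y).
Proof. by apply: continuous_dotp (cst_continuous (x:=x)) _ => ?. Qed.

Lemma continuous_dotpp : continuous (fun x : 'rV[R]_n => dotp x x).
Proof. by apply: continuous_dotp => ?. Qed.

Lemma sphereE x : sphere x <-> dotp x x = 1.
Proof.
rewrite /sphere /enorm /=; split => [h|->]; last exact: sqrtr1.
by rewrite -[dotp x x]sqr_sqrtr ?dotpp_ge0 // h expr1n.
Qed.

Lemma sphere_dotp_bound x y : sphere x -> sphere y -> -1 <= dotp x y <= 1.
Proof.
move=> /sphereE xx /sphereE yy.
have := dotpp_ge0 (1 *: x - 1 *: y); have := dotpp_ge0 (1 *: x - (-1) *: y).
rewrite !dotpp_scaleB xx yy => h1 h2; apply/andP; split; nra.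
Qed.

Lemma sphere_enormB_le x y u : sphere x -> sphere y -> sphere u ->
  (enorm (x - u) <= enorm (y - u)) = (dotp u y <= dotp u x).
Proof.
move=> /sphereE xx /sphereE yy /sphereE uu.
rewrite /enorm ler_sqrt ?dotpp_ge0 // -[x]scale1r -[y]scale1r -[u]scale1r.
rewrite !dotpp_scaleB !scale1r xx yy uu (dotpC u x) (dotpC u y).
by apply/idP/idP => h; nra.
Qed.

Lemma sphere_normr_le1 x : sphere x -> `|x| <= 1.
Proof.
move=> /sphereE xx; rewrite /Num.norm /= mx_normrE; apply: bigmax_le => // -[i j] _ /=.
have -> : i = ord0 by apply: val_inj; case: i => -[].
rewrite -(@ler_pXn2r _ 2) ?nnegrE ?normr_ge0 ?ler01 // expr1n real_normK ?num_real //.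
by have := coord_sqr_le_dotpp x j; rewrite xx.
Qed.

Lemma compact_sphere_halfspace (Q : set 'rV[R]_n) w (d : R) : closed Q ->
  compact (Q `&` sphere (n:=n) `&` [set v | dotp w v <= d]).
Proof.
move=> clQ; apply: bounded_closed_compact.
  exists 1; split => // M M1 x [[_ Sx] _].
  exact: le_trans (sphere_normr_le1 Sx) (ltW M1).
have -> : sphere (R:=R) (n:=n) = (fun v => dotp v v) @^-1` [set 1].
  by apply/seteqP; split => x /sphereE.
apply: closedI; first apply: closedI => //.
  by apply: preimage_closed; [move=> x _; exact: continuous_dotpp | exact: closed_eq].
have -> : [set v | dotp w v <= d] = (fun v => dotp w v) @^-1` [set x | x <= d].
  by [].
by apply: preimage_closed; [move=> x _; exact: continuous_dotpr | exact: closed_le].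
Qed.

End Dotp.

Section SphereProjection.
Variables (R : realType) (n : nat).
Implicit Types (P Q X : set 'rV[R]_n) (u v x y : 'rV[R]_n).

Lemma Proj_sphereE X u : X `<=` sphere (n:=n) -> sphere u ->
  Proj X u = [set v | X v /\ forall y, X y -> dotp u y <= dotp u v].
Proof.
move=> XS Su; apply/seteqP; split => v [Xv vmin]; split => // y Xy.
  by rewrite -(sphere_enormB_le (XS _ Xv) (XS _ Xy) Su); exact: vmin.
by rewrite (sphere_enormB_le (XS _ Xv) (XS _ Xy) Su); exact: vmin.
Qed.

Lemma Proj_sphere_singleton X u v : X `<=` sphere (n:=n) -> sphere u ->
  Proj X u = [set v] ->
  [/\ X v, forall y, X y -> dotp u y <= dotp u v
         & forall y, X y -> y != v -> dotp u y < dotp u v].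
Proof.
move=> XS Su; rewrite Proj_sphereE // => Projv.
have [Xv vmax] : X v /\ forall y, X y -> dotp u y <= dotp u v.
  by have : [set v] v by []; rewrite -Projv.
split=> // y Xy yv; rewrite lt_neqAle vmax // andbT; apply: contra_neq yv => uyv.
by have : [set v] y by rewrite -Projv; split=> // z Xz; rewrite uyv; exact: vmax.
Qed.

Lemma FQ_argmax Q u v : (Q `&` sphere (n:=n)) v ->
  (forall y, (Q `&` sphere (n:=n)) y -> dotp u y <= dotp u v) -> FQ Q u = dotp u v.
Proof.
move=> Kv vmax; apply/eqP; rewrite eq_le; apply/andP; split.
  by apply: ge_sup; [exists (dotp u v), v | move=> _ [y Ky <-]; exact: vmax].
apply: sup_upper_bound; last by exists v.
split; first by exists (dotp u v), v.
by exists (dotp u v) => _ [y Ky <-]; exact: vmax.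
Qed.

Lemma FQ_le Q u v M : (Q `&` sphere (n:=n)) v ->
  (forall y, (Q `&` sphere (n:=n)) y -> dotp u y <= M) -> FQ Q u <= M.
Proof.
by move=> Kv hM; apply: ge_sup; [exists (dotp u v), v | move=> _ [y Ky <-]; exact: hM].
Qed.

Lemma sPQ_solution P Q u : is_solution P Q u -> sPQ P Q = FQ Q u.
Proof.
move=> [Pu umin]; apply/eqP; rewrite eq_le; apply/andP; split.
  by apply: ge_inf; [exists (FQ Q u) => _ [y Py <-]; exact: umin | exists u].
by apply: lb_le_inf; [exists (FQ Q u), u | move=> _ [y Py <-]; exact: umin].
Qed.

Lemma span2_lincomb P Q x y (a b : R) : P x -> Q y -> span2 P Q (a *: x + b *: y).
Proof. by move=> Px Qy L [_ LD LZ] PL QL; apply: LD; apply: LZ; [exact: PL | exact: QL]. Qed.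

End SphereProjection.

Lemma sqrtr1B_bounds (R : rcfType) (s : R) : 0 <= s <= 1 ->
  1 - s <= Num.sqrt (1 - s) <= 1.
Proof.
move=> /andP[s_ge0 s_le1]; have s1_ge0 : 0 <= 1 - s by rewrite subr_ge0.
have sqr_sqrt := sqr_sqrtr s1_ge0; have sqrt_ge0 := sqrtr_ge0 (1 - s).
have sqrt_le1 : Num.sqrt (1 - s) <= 1.
  by rewrite -[X in _ <= X]sqrtr1 ler_wsqrtr // gerBl.
by rewrite sqrt_le1 andbT; nra.
Qed.

Section Rotation.
Variables (R : realType) (n : nat) (u v : 'rV[R]_n).
Hypotheses (Su : sphere u) (Sv : sphere v) (uv_sqr_lt1 : dotp u v ^+ 2 < 1).

Local Notation c := (dotp u v).
Local Notation a := (1 - dotp u v ^+ 2).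

Definition tangent := v - c *: u.

Definition rotate (t : R) := Num.sqrt (1 - t ^+ 2 * a) *: u - t *: tangent.

Let uu : dotp u u = 1. Proof. exact/sphereE. Qed.
Let vv : dotp v v = 1. Proof. exact/sphereE. Qed.

Let a_bounds : 0 <= a <= 1.
Proof. by rewrite subr_ge0 ltW //= gerBl sqr_ge0. Qed.

Let t2a_bounds t : 0 <= t <= 1 -> 0 <= t ^+ 2 * a <= t ^+ 2.
Proof.
move=> /andP[t_ge0 t_le1]; have /andP[a_ge0 a_le1] := a_bounds.
by rewrite mulr_ge0 ?exprn_ge0 // ler_piMr ?exprn_ge0.
Qed.

Let alpha_bounds t : 0 <= t <= 1 ->
  1 - t ^+ 2 * a <= Num.sqrt (1 - t ^+ 2 * a) <= 1.
Proof.
move=> t01; apply: sqrtr1B_bounds; have /andP[-> le] := t2a_bounds t01.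
by apply: le_trans le _; rewrite exprn_ile1 //; case/andP: t01.
Qed.

Lemma dotp_tangentr : dotp u tangent = 0.
Proof. by rewrite dotpBr dotpZr uu mulr1 subrr. Qed.

Lemma dotp_tangentl : dotp tangent v = a.
Proof. by rewrite dotpBl dotpZl vv; ring. Qed.

Lemma dotpp_tangent : dotp tangent tangent = a.
Proof. by rewrite !dotpBl !dotpBr !dotpZl !dotpZr uu vv (dotpC v u); ring. Qed.

Lemma dotp_tangent_ge y : sphere y -> -2 <= dotp tangent y.
Proof.
move=> Sy; rewrite dotpBl dotpZl.
have /andP[vy1 vy2] := sphere_dotp_bound Sv Sy.
have /andP[uy1 uy2] := sphere_dotp_bound Su Sy.
have /andP[c1 c2] := sphere_dotp_bound Su Sv.
nra.
Qed.

Lemma rotate_sphere t : 0 <= t <= 1 -> sphere (rotate t).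
Proof.
move=> t01; have /andP[t_ge0 t_le1] := t01; have /andP[_ t2a_le] := t2a_bounds t01.
apply/sphereE; rewrite dotpp_scaleB uu dotp_tangentr dotpp_tangent sqr_sqrtr; first ring.
by rewrite subr_ge0 (le_trans t2a_le) ?exprn_ile1.
Qed.

Lemma rotate_lincomb t :
  rotate t = (Num.sqrt (1 - t ^+ 2 * a) + t * c) *: u + (- t) *: v.
Proof. by rewrite /rotate /tangent scalerBr scalerA scalerDl scaleNr opprB addrA. Qed.

Lemma enorm_rotateB t : 0 < t <= 1 -> enorm (rotate t - u) < 2 * t.
Proof.
move=> /andP[t_gt0 t_le1]; have t01 : 0 <= t <= 1 by rewrite ltW.
have -> : rotate t - u = (Num.sqrt (1 - t ^+ 2 * a) - 1) *: u - t *: tangent.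
  by rewrite /rotate scalerBl scale1r addrAC.
rewrite /enorm dotpp_scaleB uu dotp_tangentr dotpp_tangent.
rewrite -[2 * t]gtr0_norm ?mulr_gt0 // -sqrtr_sqr ltr_sqrt ?exprn_gt0 ?mulr_gt0 //.
have /andP[alpha_ge alpha_le1] := alpha_bounds t01.
have /andP[t2a_ge0 t2a_le] := t2a_bounds t01.
have t2_gt0 : 0 < t ^+ 2 by rewrite exprn_gt0.
have alpha_ge0 := sqrtr_ge0 (1 - t ^+ 2 * a).
nra.
Qed.

Lemma dotp_rotate_le t y : 0 <= t <= 1 -> sphere y ->
  dotp (rotate t) y <= dotp u y + t ^+ 2 * a - t * dotp tangent y.
Proof.
move=> t01 Sy; rewrite dotpBl !dotpZl.
have /andP[alpha_ge alpha_le1] := alpha_bounds t01.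
have /andP[uy1 uy2] := sphere_dotp_bound Su Sy.
nra.
Qed.

Section Descent.
Variable Q : set 'rV[R]_n.
Hypotheses (clQ : closed Q) (Qv : Q v)
  (v_max : forall y, (Q `&` sphere (n:=n)) y -> y != v -> dotp u y < c).

Lemma FQ_rotate_lt : exists2 t0 : R, 0 < t0 <= 1 &
  forall t, 0 < t <= t0 -> FQ Q (rotate t) < c.
Proof.
have a_gt0 : 0 < a by rewrite subr_gt0.
have /andP[_ a_le1] := a_bounds.
have [eta eta_gt0 eta_gap] : exists2 eta : R, 0 < eta & forall y,
    (Q `&` sphere (n:=n) `&` [set y | dotp tangent y <= a / 2]) y -> dotp u y <= c - eta.
  apply: compact_lt_gap (compact_sphere_halfspace (w:=tangent) (d:=a / 2) clQ) _ _.
    exact: continuous_dotpr.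
  move=> y [Ky ty]; apply: v_max => //; apply: contraTneq ty => ->.
  by rewrite dotp_tangentl -ltNge; lra.
exists (Num.min (1 / 4) (eta / 6)); first by rewrite lt_min ge_min; lra.
move=> t /andP[t_gt0]; rewrite le_min => /andP[t_le t_le_eta].
have t01 : 0 <= t <= 1 by apply/andP; lra.
have ta_ge0 : 0 <= t * a by rewrite mulr_ge0 // ltW.
have t2a_le : t ^+ 2 * a <= t * a / 4 by nra.
have ta_le : t * a <= t by nra.
suff : FQ Q (rotate t) <= c - t * a / 4 by have := mulr_gt0 t_gt0 a_gt0; lra.
apply: (@FQ_le _ _ _ _ v) => [|y Ky]; first by split.
have rot_le := dotp_rotate_le t01 Ky.2.
have tangent_ge := dotp_tangent_ge Ky.2.
case: (lerP (dotp tangent y) (a / 2)) => ty; last first.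
  have uy_le : dotp u y <= c.
    by case: (eqVneq y v) => [->|yv]; [exact: lexx | exact/ltW/v_max].
  nra.
have := eta_gap y (conj Ky ty); nra.
Qed.

End Descent.
End Rotation.

Theorem mainTheorem8 (R : realType) (n : nat) (P Q : set 'rV[R]_n)
  (ubar : 'rV[R]_n) :
  nonzero_closed_convex_cone P -> nonzero_closed_convex_cone Q ->
  `|sPQ P Q| != 1 ->
  is_solution P Q ubar ->
  is_singleton (Proj (Q `&` sphere (n:=n)) ubar) ->
  P ubar /\ ~ rel_interior_pt (span2 P Q) P ubar.
Proof.
move=> _ [clQ _ _ _] sPQ_neq1 sol [v Projv]; have [[Pu Su] u_min] := sol.
split=> // -[e e_gt0 u_int].
have [[Qv Sv] v_max v_strict_max] :=
  Proj_sphere_singleton (@subIsetr _ _ _) Su Projv.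
have FQu : FQ Q ubar = dotp ubar v by apply: FQ_argmax.
have c_sqr_lt1 : dotp ubar v ^+ 2 < 1.
  have c_neq1 : `|dotp ubar v| != 1 by rewrite -FQu -(sPQ_solution sol).
  have /andP[c_ge c_le] := sphere_dotp_bound Su Sv.
  by rewrite lt_neqAle sqr_norm_eq1 c_neq1 /=; nra.
have [t0 /andP[t0_gt0 t0_le1] FQ_lt] :=
  FQ_rotate_lt Su Sv c_sqr_lt1 clQ Qv v_strict_max.
pose t := Num.min t0 (e / 2).
have t_gt0 : 0 < t by rewrite lt_min t0_gt0 divr_gt0.
have t_le1 : t <= 1 by rewrite ge_min t0_le1.
have t_le : t <= t0 /\ t <= e / 2 by split; rewrite ge_min lexx ?orbT.
have P_rot : P (rotate ubar v t).
  apply: u_int; first by rewrite rotate_lincomb; exact: span2_lincomb.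
  apply: lt_le_trans (enorm_rotateB Su Sv c_sqr_lt1 (t := t) _) _; lra.
have S_rot : sphere (rotate ubar v t).
  by apply: (rotate_sphere Su Sv c_sqr_lt1); rewrite ltW.
have := u_min _ (conj P_rot S_rot).
by rewrite FQu leNgt FQ_lt // t_gt0 t_le.1.
Qed.
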